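(* Suppose $v_{j1}^2+v_{j2}^2\neq0$ for $j=1$ and for $j=2$. Then, in the coordinates $[z_0,z_1,z_2,z_3,x]$, the points of $HC_F(\mathbf v,d)$ with $z_0z_1=0$ are exactly the eight points $[-1,0,1,0,0]$, $[0,-1,0,1,0]$, $[0,1,0,1,0]$, $[1,0,1,0,0]$, $[0,0,1,1,\sqrt{-1}]$, $[0,0,1,1,-\sqrt{-1}]$, $[0,0,1,-1,\sqrt{-1}]$, $[0,0,1,-1,-\sqrt{-1}]$. Equivalently, in the coordinates $[u,y_1,y_2,r_1,r_2]$, the set of points of $HC_F(\mathbf v,d)$ with $r_1r_2=0$ is this set of eight points.
   Context: On $\mathbb{C}P^4$ use homogeneous coordinates $[u,y_1,y_2,r_1,r_2]$ and the linearly equivalent coordinates $z_0=4r_1$, $z_1=4r_2$, $z_2=4(u-y_1)$, $z_3=-4(u+y_1)$, $x=-4y_2$. For parameters $[\mathbf v,d]=[v_{11},v_{12},v_{21},v_{22},d]\in\mathbb{C}P^4$ (complex, not all zero), $HC_F(\mathbf v,d)$ is defined by $z_2^2-z_0^2-(z_3^2-z_1^2)=0$, $x^2+z_2^2-z_0^2=0$, and $(v_{22}z_0-v_{12}z_1)x+v_{21}z_0z_3-v_{11}z_1z_2-dz_0z_1=0$; in the original coordinates these are $(u-y_1)^2+y_2^2=r_1^2$, $(u+y_1)^2+y_2^2=r_2^2$, and $L_2r_1-L_1r_2-dr_1r_2=0$ with $L_1=v_{11}(u-y_1)-v_{12}y_2$, $L_2=-v_{21}(u+y_1)-v_{22}y_2$.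 *)

From HB Require Import structures.
From mathcomp Require Import all_boot all_order all_algebra.
From mathcomp Require Import complex.
From mathcomp Require Import Rstruct.
Set Implicit Arguments. Unset Strict Implicit. Unset Printing Implicit Defensive.
Import Order.TTheory GRing.Theory Num.Theory.
Local Open Scope ring_scope.

Definition CC : numClosedFieldType := Rdefinitions.R[i].

(* A point of CP^4 is represented by a nonzero vector of homogeneous
   coordinates in C^5; two representatives give the same point iff they
   are proportional by a nonzero scalar. *)
Definition vec5 := 'rV[CC]_5.

Definition mk5 (a b c e f : CC) : vec5 :=
  \row_(i < 5) nth 0 [:: a; b; c; e; f] i.

Definition co (p : vec5) (k : nat) : CC := p ord0 (inord k).

Definition same_point (p q : vec5) : Prop :=
  exists2 c : CC, c != 0 & p = c *: q.

(* Parameters [v, d] = [v11, v12, v21, v22, d] *)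
Definition HCF_z (v11 v12 v21 v22 d : CC) (p : vec5) : Prop :=
  let z0 := co p 0 in let z1 := co p 1 in let z2 := co p 2 in
  let z3 := co p 3 in let x := co p 4 in
  [/\ z2 ^+ 2 - z0 ^+ 2 - (z3 ^+ 2 - z1 ^+ 2) = 0,
      x ^+ 2 + z2 ^+ 2 - z0 ^+ 2 = 0 &
      (v22 * z0 - v12 * z1) * x + v21 * z0 * z3 - v11 * z1 * z2
        - d * z0 * z1 = 0].

Definition HCF_u (v11 v12 v21 v22 d : CC) (p : vec5) : Prop :=
  let u := co p 0 in let y1 := co p 1 in let y2 := co p 2 in
  let r1 := co p 3 in let r2 := co p 4 in
  let L1 := v11 * (u - y1) - v12 * y2 in
  let L2 := - v21 * (u + y1) - v22 * y2 in
  [/\ (u - y1) ^+ 2 + y2 ^+ 2 = r1 ^+ 2,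
      (u + y1) ^+ 2 + y2 ^+ 2 = r2 ^+ 2 &
      L2 * r1 - L1 * r2 - d * r1 * r2 = 0].

Definition z_of_u (p : vec5) : vec5 :=
  let u := co p 0 in let y1 := co p 1 in let y2 := co p 2 in
  let r1 := co p 3 in let r2 := co p 4 in
  mk5 (4 * r1) (4 * r2) (4 * (u - y1)) (- (4 * (u + y1))) (- (4 * y2)).

Definition eight_points : seq vec5 :=
  [:: mk5 (-1) 0 1 0 0; mk5 0 (-1) 0 1 0; mk5 0 1 0 1 0; mk5 1 0 1 0 0;
      mk5 0 0 1 1 'i; mk5 0 0 1 1 (- 'i);
      mk5 0 0 1 (-1) 'i; mk5 0 0 1 (-1) (- 'i)].

From HB Require Import structures.
From mathcomp Require Import all_boot all_order all_algebra.
From mathcomp Require Import complex Rstruct.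
From mathcomp Require Import ring.
Set Implicit Arguments. Unset Strict Implicit. Unset Printing Implicit Defensive.
Import Order.TTheory GRing.Theory Num.Theory.
Local Open Scope ring_scope.

(* On the hyperplanes z0 = 0 and z1 = 0 the third equation becomes linear.
   If z0 = 0 <> z1 it reads z1 (v11 z2 + v12 x) = 0, while the two quadrics
   force z2^2 + x^2 = 0; an isotropic vector (z2, x) orthogonal to the
   non-isotropic vector (v11, v12) vanishes, so z2 = x = 0 and z3 = +-z1.
   The case z1 = 0 <> z0 is symmetric, with (z3, x) and (v21, v22).  If
   z0 = z1 = 0 the quadrics alone give z3 = +-z2 and x = +-i z2.  The
   statement in [u, y1, y2, r1, r2] is transported by the invertible change
   of coordinates, under which z0 z1 = 16 r1 r2. *)

Lemma sqrf_eq (F : idomainType) (x y : F) : x ^+ 2 = y ^+ 2 -> x = y \/ x = - y.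
Proof. by move/eqP; rewrite eqf_sqr => /orP[] /eqP; [left | right]. Qed.

Lemma sqr_add_sqr_eq0 (C : numClosedFieldType) (x y : C) :
  x ^+ 2 + y ^+ 2 = 0 -> x = 'i * y \/ x = - ('i * y).
Proof.
move=> h; apply: sqrf_eq; rewrite exprMn sqrCi mulN1r.
by apply/eqP; rewrite -addr_eq0 h.
Qed.

Lemma orthogonal_isotropic_eq0 (F : idomainType) (v1 v2 x y : F) :
  v1 ^+ 2 + v2 ^+ 2 != 0 -> v1 * x + v2 * y = 0 -> x ^+ 2 + y ^+ 2 = 0 ->
  x = 0 /\ y = 0.
Proof.
move=> v_nz orth iso.
have x2v : x ^+ 2 * (v1 ^+ 2 + v2 ^+ 2) = 0.
  have -> : x ^+ 2 * (v1 ^+ 2 + v2 ^+ 2)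
          = (v1 * x + v2 * y) * (v1 * x - v2 * y) + v2 ^+ 2 * (x ^+ 2 + y ^+ 2).
    by ring.
  by rewrite orth iso mul0r mulr0 addr0.
have x0 : x = 0.
  by move/eqP: x2v; rewrite mulf_eq0 (negbTE v_nz) orbF expf_eq0 => /eqP.
by split=> //; move/eqP: iso; rewrite x0 expr0n add0r expf_eq0 => /eqP.
Qed.

Lemma eqs_scaled_iff (F : idomainType) (k a1 b1 a2 b2 c y1 y2 y3 : F) :
  k != 0 -> y1 = k * ((a1 - b1) - (a2 - b2)) -> y2 = k * (a1 - b1) ->
  y3 = k * c ->
  [/\ a1 = b1, a2 = b2 & c = 0] <-> [/\ y1 = 0, y2 = 0 & y3 = 0].
Proof.
move=> k_nz -> -> ->; have kx_eq0 x : k * x = 0 -> x = 0.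
  by move/eqP; rewrite mulf_eq0 (negbTE k_nz) => /eqP.
split=> [[-> -> ->] | [/kx_eq0 + /kx_eq0/subr0_eq a_eq /kx_eq0 ->]].
  by rewrite !subrr !mulr0.
by rewrite a_eq subrr sub0r => /eqP; rewrite oppr_eq0 subr_eq0 => /eqP.
Qed.

Lemma co_mk5 a b c e f (k : nat) : (k < 5)%N ->
  co (mk5 a b c e f) k = nth 0 [:: a; b; c; e; f] k.
Proof. by move=> k_lt; rewrite /co mxE inordK. Qed.

Lemma co_scale k p n : co (k *: p) n = k * co p n.
Proof. by rewrite /co mxE. Qed.

Lemma co0 n : co 0 n = 0.
Proof. by rewrite /co mxE. Qed.

Lemma mk5_co p : mk5 (co p 0) (co p 1) (co p 2) (co p 3) (co p 4) = p.
Proof.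
apply/rowP=> i; rewrite /co /mk5 mxE; have -> : ord0 = 0 :> 'I_1 by apply/val_inj.
by case: i => [[|[|[|[|[|//]]]]] i_lt]; congr (p _ _); apply/val_inj; rewrite /= inordK.
Qed.

Lemma mk5_eq0 a b c e f :
  (mk5 a b c e f == 0) = [&& a == 0, b == 0, c == 0, e == 0 & f == 0].
Proof.
apply/eqP/and5P => [p0 | [/eqP-> /eqP-> /eqP-> /eqP-> /eqP->]].
  have nth_eq0 k : (k < 5)%N -> nth 0 [:: a; b; c; e; f] k = 0.
    by move=> k_lt; rewrite -co_mk5 // p0 co0.
  by split; apply/eqP; [apply: (nth_eq0 0%N) | apply: (nth_eq0 1%N)
    | apply: (nth_eq0 2%N) | apply: (nth_eq0 3%N) | apply: (nth_eq0 4%N)].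
by apply/rowP=> -[[|[|[|[|[|//]]]]] i_lt]; rewrite !mxE.
Qed.

Lemma same_point_mk5 k a b c e f a' b' c' e' f' : k != 0 ->
  a = k * a' -> b = k * b' -> c = k * c' -> e = k * e' -> f = k * f' ->
  same_point (mk5 a b c e f) (mk5 a' b' c' e' f').
Proof.
move=> k_nz -> -> -> -> ->; exists k => //.
by apply/rowP=> -[[|[|[|[|[|//]]]]] i_lt]; rewrite !mxE.
Qed.

Definition among_eight_points (p : vec5) : Prop :=
  exists2 q, q \in eight_points & same_point p q.

Lemma among_eight_points_z01 c e f : c != 0 ->
  e ^+ 2 = c ^+ 2 -> f ^+ 2 + c ^+ 2 = 0 -> among_eight_points (mk5 0 0 c e f).
Proof.
move=> c_nz /sqrf_eq[]-> /sqr_add_sqr_eq0[]->.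
- exists (mk5 0 0 1 1 'i); first by rewrite !inE eqxx ?orbT.
  by apply: (same_point_mk5 c_nz); ring.
- exists (mk5 0 0 1 1 (- 'i)); first by rewrite !inE eqxx ?orbT.
  by apply: (same_point_mk5 c_nz); ring.
- exists (mk5 0 0 1 (-1) 'i); first by rewrite !inE eqxx ?orbT.
  by apply: (same_point_mk5 c_nz); ring.
- exists (mk5 0 0 1 (-1) (- 'i)); first by rewrite !inE eqxx ?orbT.
  by apply: (same_point_mk5 c_nz); ring.
Qed.

Lemma among_eight_points_z0 b e : b != 0 ->
  e ^+ 2 = b ^+ 2 -> among_eight_points (mk5 0 b 0 e 0).
Proof.
move=> b_nz /sqrf_eq[]->.
- exists (mk5 0 1 0 1 0); first by rewrite !inE eqxx ?orbT.
  by apply: (same_point_mk5 b_nz); ring.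
- exists (mk5 0 (-1) 0 1 0); first by rewrite !inE eqxx ?orbT.
  by apply: (same_point_mk5 (k := - b)); rewrite ?oppr_eq0 //; ring.
Qed.

Lemma among_eight_points_z1 a c : a != 0 ->
  c ^+ 2 = a ^+ 2 -> among_eight_points (mk5 a 0 c 0 0).
Proof.
move=> a_nz /sqrf_eq[]->.
- exists (mk5 1 0 1 0 0); first by rewrite !inE eqxx ?orbT.
  by apply: (same_point_mk5 a_nz); ring.
- exists (mk5 (-1) 0 1 0 0); first by rewrite !inE eqxx ?orbT.
  by apply: (same_point_mk5 (k := - a)); rewrite ?oppr_eq0 //; ring.
Qed.

Lemma HCF_z_scale (v11 v12 v21 v22 d k : CC) p :
  HCF_z v11 v12 v21 v22 d p -> HCF_z v11 v12 v21 v22 d (k *: p).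
Proof.
rewrite /HCF_z !co_scale => -[E1 E2 E3].
by split; rewrite -(mulr0 (k ^+ 2)); [rewrite -E1 | rewrite -E2 | rewrite -E3]; ring.
Qed.

Lemma eight_points_on_HCF_z (v11 v12 v21 v22 d : CC) q : q \in eight_points ->
  HCF_z v11 v12 v21 v22 d q /\ co q 0 * co q 1 = 0.
Proof.
move/(nthP 0) => -[[|[|[|[|[|[|[|[|//]]]]]]]] _ <-];
  rewrite /HCF_z !co_mk5 //= ?sqrrN ?sqrCi; (split; [split |]); ring.
Qed.

Section HyperbolicCurve.

Variables v11 v12 v21 v22 d : CC.

Lemma HCF_z_mk5 a b c e f : HCF_z v11 v12 v21 v22 d (mk5 a b c e f) ->
  [/\ f ^+ 2 + c ^+ 2 = a ^+ 2, f ^+ 2 + e ^+ 2 = b ^+ 2 &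
      a * (v21 * e + v22 * f) = b * (v11 * c + v12 * f) + d * a * b].
Proof.
rewrite /HCF_z !co_mk5 //= => -[E1 E2 E3]; split; apply: subr0_eq => //.
  have -> : f ^+ 2 + e ^+ 2 - b ^+ 2
          = (f ^+ 2 + c ^+ 2 - a ^+ 2) - (c ^+ 2 - a ^+ 2 - (e ^+ 2 - b ^+ 2)).
    by ring.
  by rewrite E1 E2 subrr.
by rewrite -E3; ring.
Qed.

Hypotheses (v1_nz : v11 ^+ 2 + v12 ^+ 2 != 0) (v2_nz : v21 ^+ 2 + v22 ^+ 2 != 0).

Lemma HCF_z_z0z1_eq0_among a b c e f : mk5 a b c e f != 0 ->
  HCF_z v11 v12 v21 v22 d (mk5 a b c e f) -> a * b = 0 ->
  among_eight_points (mk5 a b c e f).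
Proof.
move=> p_nz /HCF_z_mk5[Q1 Q2 Q3] /eqP; rewrite mulf_eq0.
have [a0 _ | a_nz /= /eqP b0] := eqVneq a 0; last first.
  have orth : v21 * e + v22 * f = 0.
    by apply: (mulfI a_nz); rewrite Q3 b0; ring.
  have [e0 f0] : e = 0 /\ f = 0.
    by apply: orthogonal_isotropic_eq0 v2_nz orth _; rewrite addrC Q2 b0 expr0n.
  rewrite b0 e0 f0; apply: among_eight_points_z1 => //.
  by rewrite -Q1 f0 expr0n add0r.
have [b0 | b_nz] := eqVneq b 0.
  have c_nz : c != 0.
    apply: contraNneq p_nz => c0; rewrite mk5_eq0 a0 b0 c0 eqxx /=.
    move: Q1; rewrite a0 c0 expr0n addr0 => /eqP; rewrite sqrf_eq0 => /eqP f0.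
    by move: Q2; rewrite b0 f0 expr0n add0r eqxx andbT => /eqP; rewrite sqrf_eq0.
  rewrite a0 b0; apply: among_eight_points_z01 => //.
    by apply: (addrI (f ^+ 2)); rewrite Q1 Q2 a0 b0.
  by rewrite Q1 a0 expr0n.
have orth : v11 * c + v12 * f = 0.
  apply: (mulfI b_nz); apply: (addIr (d * a * b)).
  by rewrite -Q3 a0; ring.
have [c0 f0] : c = 0 /\ f = 0.
  by apply: orthogonal_isotropic_eq0 v1_nz orth _; rewrite addrC Q1 a0 expr0n.
rewrite a0 c0 f0; apply: among_eight_points_z0 => //.
by rewrite -Q2 f0 expr0n add0r.
Qed.

Lemma HCF_z_z0z1_eq0_iff p : p != 0 ->
  (HCF_z v11 v12 v21 v22 d p /\ co p 0 * co p 1 = 0) <-> among_eight_points p.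
Proof.
move=> p_nz; split=> [[] | [q q_in [k _ ->]]].
  move: p_nz; rewrite -(mk5_co p) !co_mk5 //=; exact: HCF_z_z0z1_eq0_among.
have [q_on q01] := eight_points_on_HCF_z v11 v12 v21 v22 d q_in.
split; first exact: HCF_z_scale.
by rewrite !co_scale mulrACA q01 mulr0.
Qed.

End HyperbolicCurve.

Definition u_of_z (q : vec5) : vec5 :=
  mk5 ((co q 2 - co q 3) / 8) (- (co q 2 + co q 3) / 8) (- co q 4 / 4)
      (co q 0 / 4) (co q 1 / 4).

Lemma z_of_uK : cancel z_of_u u_of_z.
Proof.
by move=> p; rewrite /u_of_z /z_of_u !co_mk5 //= -[RHS](mk5_co p); congr mk5; field.
Qed.

Lemma z_of_u_neq0 p : p != 0 -> z_of_u p != 0.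
Proof.
apply: contraNneq => pz0; rewrite -(z_of_uK p) pz0 /u_of_z !co0 mk5_eq0.
by rewrite subrr addr0 oppr0 !mul0r eqxx.
Qed.

Lemma HCF_u_iff_z_of_u (v11 v12 v21 v22 d : CC) p :
  HCF_u v11 v12 v21 v22 d p <-> HCF_z v11 v12 v21 v22 d (z_of_u p).
Proof.
rewrite /HCF_u /HCF_z /z_of_u !co_mk5 //=.
by apply: (eqs_scaled_iff (k := 16)); rewrite ?pnatr_eq0 //; ring.
Qed.

Lemma co_z_of_u_01 p : co (z_of_u p) 0 * co (z_of_u p) 1 = 16 * (co p 3 * co p 4).
Proof. by rewrite /z_of_u !co_mk5 //=; ring. Qed.

Theorem lemma5p7 (v11 v12 v21 v22 d : CC) :
  (v11 ^+ 2 + v12 ^+ 2 != 0) -> (v21 ^+ 2 + v22 ^+ 2 != 0) ->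
  (forall p : vec5, p != 0 ->
     (HCF_z v11 v12 v21 v22 d p /\ co p 0 * co p 1 = 0) <->
     (exists2 q, q \in eight_points & same_point p q))
  /\
  (forall p : vec5, p != 0 ->
     (HCF_u v11 v12 v21 v22 d p /\ co p 3 * co p 4 = 0) <->
     (exists2 q, q \in eight_points & same_point (z_of_u p) q)).
Proof.
move=> v1_nz v2_nz; have classify := HCF_z_z0z1_eq0_iff d v1_nz v2_nz.
split; first exact: classify.
move=> p p_nz; have z_on := classify _ (z_of_u_neq0 p_nz).
split=> [[/HCF_u_iff_z_of_u hz r34] | /z_on[/HCF_u_iff_z_of_u hu]].
  by apply/z_on; rewrite co_z_of_u_01 r34 mulr0.
rewrite co_z_of_u_01 => /eqP; rewrite mulf_eq0 pnatr_eq0 /= => /eqP r34.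
by split.
Qed.
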